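(* Let $\mathcal{D}$ and $\mathcal{F}$ be semistable vector bundles on the Fargues–Fontaine curve $X$ with $\mathrm{HNvec}(\mathcal{D})=(\vec\beta)$, $\mathrm{HNvec}(\mathcal{F})=(\vec\gamma)$ and $\vec\beta\preceq\vec\gamma$. Let $\mathcal{E}$ be a vector bundle on $X$ with $\mathrm{HN}(\mathcal{E})\le\mathrm{HN}(\mathcal{D}\oplus\mathcal{F})$ (same endpoints), and suppose the maximal slope of $\mathcal{E}$ is strictly less than the slope of $\mathcal{F}$. Let $\mathcal{K}$ be a vector bundle on $X$ with the same rank and degree as $\mathcal{D}$ such that (i) the maximal slope of $\mathcal{K}$ is at most the maximal slope of $\mathcal{E}$, and (ii) $\mathcal{K}$ is not semistable. Then \[\deg(\mathcal{K}^\vee\otimes\mathcal{E})^{\ge 0}<\deg(\mathcal{K}^\vee\otimes\mathcal{K})^{\ge 0}+\deg(\mathcal{E}^\vee\otimes\mathcal{F})^{\ge 0}.\]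
   Context: $X=X_{E,F}$ is the Fargues–Fontaine curve. For a bundle $\mathcal{V}\simeq\bigoplus_{i=1}^s\mathcal{O}(d_i/h_i)^{m_i}$ with $d_1/h_1>\cdots>d_s/h_s$ in lowest terms ($h_i>0$), the HN vectors are $\mathrm{HNvec}(\mathcal{V})=(v_i)$ with $v_i=(m_ih_i,m_id_i)$; for a semistable bundle this is the single vector $(\mathrm{rank},\deg)$. For vectors with nonzero $x$-coordinate, $v\preceq w$ means slope of $v\le$ slope of $w$. $\mathrm{HN}$ is the Harder–Narasimhan polygon starting at the origin, and $P\le P'$ means $P$ lies on or below $P'$ with the same endpoints. $\mathcal{U}^{\ge 0}$ is the step of the HN filtration of $\mathcal{U}$ consisting of HN pieces of slope $\ge 0$. *)

(* Vector bundles on the Fargues--Fontaine curve X_{E,F} are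
   modelled through the classification theorem: every bundle is (up to
   isomorphism) a direct sum of semistable bundles, and a semistable bundle of
   rank r > 0 and degree d is O(d/r)-isotypic, determined by (r, d).
   A bundle is thus represented by a finite list of semistable summands
   (rank, degree). *)
From HB Require Import structures.
From mathcomp Require Import all_boot all_order all_algebra.
Set Implicit Arguments. Unset Strict Implicit. Unset Printing Implicit Defensive.
Import Order.TTheory GRing.Theory Num.Theory.
Local Open Scope ring_scope.

Definition piece := (nat * int)%type.
Definition bundle := seq piece.

Definition wf (V : bundle) : bool := all (fun p : piece => (0 < p.1)%N) V.

Definition pslope (p : piece) : rat := (p.2)%:~R / (p.1)%:R.

Definition rk (V : bundle) : nat := (\sum_(p <- V) p.1)%N.
Definition dg (V : bundle) : int := \sum_(p <- V) p.2.

Definition slope (V : bundle) : rat := (dg V)%:~R / (rk V)%:R.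

Definition maxslope (V : bundle) : rat :=
  foldr (fun p m => Num.max (pslope p) m) (pslope (head (1%N, 0) V)) V.

Definition semistable (V : bundle) : bool :=
  all (fun p => pslope p == pslope (head (1%N, 0) V)) V.

(* direct sum, dual, tensor product (tensor of semistable bundles of slopes
   l, m is semistable of slope l + m; ranks multiply) *)
Definition dsum (V W : bundle) : bundle := V ++ W.
Definition dual (V : bundle) : bundle := [seq (p.1, - p.2) | p <- V].
Definition tens (V W : bundle) : bundle :=
  [seq (((p : piece).1 * q.1)%N, p.2 * (q.1)%:Z + q.2 * (p.1)%:Z) | p : piece <- V, q : piece <- W].

(* degree of V^{>= 0}, the step of the HN filtration with slopes >= 0 *)
Definition deg_ge0 (V : bundle) : int := \sum_(p <- V | 0 <= p.2) p.2.

(* Harder--Narasimhan polygon: summands sorted by decreasing slope, as a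
   piecewise-linear function on [0, rk V] starting at the origin. *)
Definition hn_sorted (V : bundle) : bundle :=
  sort (fun p q : piece => pslope q <= pslope p) V.

Fixpoint hn_eval (l : bundle) (x : rat) : rat :=
  match l with
  | [::] => 0
  | p :: l' => if x <= (p.1)%:R then x * pslope p
               else (p.2)%:~R + hn_eval l' (x - (p.1)%:R)
  end.

Definition HN (V : bundle) (x : rat) : rat := hn_eval (hn_sorted V) x.

Definition HN_le (V W : bundle) : Prop :=
  rk V = rk W /\ dg V = dg W /\
  forall x : rat, 0 <= x -> x <= (rk V)%:R -> HN V x <= HN W x.

(* Let M <= N be the slopes of D and F, b and f their ranks, and A the maximal
   slope of E.  All HN slopes of E lie in [M, A], the lower bound because the
   last HN slope of E is at least that of D ⊕ F.  For an HN piece k of K, of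
   rank r and degree d, compare deg Hom(k, E)^{>=0} - deg Hom(k, K)^{>=0} with
   f (N r - d).  If d <= M r, all HN slopes of Hom(k, E) are >= 0 and
   deg Hom(k, K)^{>=0} >= deg Hom(k, K), so the bound reduces to an identity
   in ranks and degrees.  If d > M r, bounding the convex function max(0, s - d/r) on
   [M, A] by its chord improves the bound by f (N - A) (d - M r) / (A - M).
   Summing over k, the main terms add up to f b (N - M) <= deg(E^∨ ⊗ F)^{>=0},
   and the improvement is positive because K, of slope M but not semistable,
   has a piece of slope > M. *)

From mathcomp Require Import all_boot all_order all_algebra.
From mathcomp Require Import ring lra.
Import Order.TTheory GRing.Theory Num.Theory.
Set Implicit Arguments. Unset Strict Implicit.
Local Open Scope ring_scope.

Definition prank (p : piece) : rat := (p.1)%:R.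
Definition pdeg (p : piece) : rat := (p.2)%:~R.

Lemma rk_sum (V : bundle) : (rk V)%:R = \sum_(p <- V) prank p.
Proof. by rewrite /rk natr_sum. Qed.

Lemma dg_sum (V : bundle) : (dg V)%:~R = \sum_(p <- V) pdeg p.
Proof. by rewrite /dg rmorph_sum. Qed.

Lemma prank_gt0 (V : bundle) p : wf V -> p \in V -> 0 < prank p.
Proof. by move=> /allP wV /wV; rewrite ltr0n. Qed.

Lemma pslope_leE p c : 0 < prank p -> (pslope p <= c) = (pdeg p <= c * prank p).
Proof. exact: ler_pdivrMr. Qed.

Lemma pslope_geE p c : 0 < prank p -> (c <= pslope p) = (c * prank p <= pdeg p).
Proof. exact: ler_pdivlMr. Qed.

Lemma pdeg_pslope p : 0 < prank p -> pdeg p = pslope p * prank p.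
Proof. by move=> r_gt0; rewrite divfK // lt0r_neq0. Qed.

Lemma sum_pdeg_const (V : bundle) c :
  (forall p, p \in V -> pdeg p = c * prank p) ->
  \sum_(p <- V) pdeg p = c * \sum_(p <- V) prank p.
Proof. by move=> Vc; rewrite mulr_sumr !big_seq; apply: eq_bigr => p /Vc. Qed.

Lemma dg_slope (V : bundle) : (0 < rk V)%N -> (dg V)%:~R = slope V * (rk V)%:R.
Proof. by move=> rk_gt0; rewrite divfK // pnatr_eq0 -lt0n. Qed.

Lemma semistable_pdeg (V : bundle) : wf V -> semistable V -> (0 < rk V)%N ->
  forall p, p \in V -> pdeg p = slope V * prank p.
Proof.
move=> wV /allP ssV rkV_gt0.
set c := pslope (head (1%N, 0) V).
have Vc p : p \in V -> pdeg p = c * prank p.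
  by move=> pV; rewrite pdeg_pslope ?(prank_gt0 wV pV) // (eqP (ssV p pV)).
suff -> : slope V = c by [].
rewrite /slope dg_sum (sum_pdeg_const Vc) -rk_sum mulfK //.
by rewrite pnatr_eq0 -lt0n.
Qed.

Lemma semistable_of_pdeg_le (V : bundle) c : wf V ->
  (forall p, p \in V -> pdeg p <= c * prank p) ->
  (dg V)%:~R = c * (rk V)%:R -> semistable V.
Proof.
move=> wV Vc; rewrite dg_sum rk_sum mulr_sumr => /eqP.
rewrite eq_sym -subr_eq0 -sumrB big_seq psumr_eq0 => [/allP Veq|p pV]; last first.
  by rewrite subr_ge0 Vc.
have slopeV p : p \in V -> pslope p = c.
  move=> pV; apply/eqP; rewrite eq_le pslope_leE ?pslope_geE ?(prank_gt0 wV pV) //.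
  by rewrite Vc //= -subr_le0 (eqP (implyP (Veq p pV) pV)).
case: V wV Vc Veq slopeV => [|q V] // _ _ _ slopeV.
by apply/allP => p pV; rewrite /= !slopeV ?mem_head.
Qed.

Lemma maxslope_ge (V : bundle) p : p \in V -> pslope p <= maxslope V.
Proof.
rewrite /maxslope; move: (pslope (head _ V)) => b; elim: V => [|q V IH] //=.
by rewrite inE le_max => /orP[/eqP-> | /IH ->]; rewrite ?lexx ?orbT.
Qed.

Definition hom_pdeg (v w : piece) : rat :=
  Num.max 0 (pdeg w * prank v - pdeg v * prank w).

Definition hom_deg (V W : bundle) : rat :=
  \sum_(v <- V) \sum_(w <- W) hom_pdeg v w.

Lemma deg_ge0_tens_dual (V W : bundle) :
  (deg_ge0 (tens (dual V) W))%:~R = hom_deg V W.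
Proof.
rewrite /deg_ge0 big_mkcond rmorph_sum /tens /dual big_allpairs_dep big_map.
apply: eq_bigr => v _; apply: eq_bigr => w _; rewrite /hom_pdeg.
have -> : pdeg w * prank v - pdeg v * prank w = (- v.2 * w.1%:Z + w.2 * v.1%:Z)%:~R.
  by rewrite intrD !intrM intrN mulNr addrC.
by case: leP => [x_ge0 | x_lt0];
  [rewrite max_r ?ler0z | rewrite max_l ?mulr0z // ltW // ltrz0].
Qed.

Lemma hom_pdeg_ge0 v w : 0 <= hom_pdeg v w.
Proof. by rewrite le_max lexx. Qed.

Lemma hom_row_ge v (W : bundle) :
  prank v * (dg W)%:~R - pdeg v * (rk W)%:R <= \sum_(w <- W) hom_pdeg v w.
Proof.
rewrite dg_sum rk_sum mulr_sumr mulr_sumr -sumrB.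
by apply: ler_sum => w _; rewrite le_max mulrC [pdeg v * _]mulrC lexx orbT.
Qed.

Lemma hom_deg_ge (V W : bundle) :
  (rk V)%:R * (dg W)%:~R - (dg V)%:~R * (rk W)%:R <= hom_deg V W.
Proof.
rewrite (rk_sum V) (dg_sum V) !mulr_suml -sumrB.
by apply: ler_sum => v _; apply: hom_row_ge.
Qed.

Lemma hom_row_eq v (W : bundle) :
  (forall w, w \in W -> pdeg v * prank w <= pdeg w * prank v) ->
  \sum_(w <- W) hom_pdeg v w = prank v * (dg W)%:~R - pdeg v * (rk W)%:R.
Proof.
move=> Wv; rewrite dg_sum rk_sum mulr_sumr mulr_sumr -sumrB !big_seq.
by apply: eq_bigr => w /Wv vw; rewrite /hom_pdeg max_r ?subr_ge0 // mulrC [pdeg v * _]mulrC.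
Qed.

(* The convex function [max 0 (slope w - slope v)] of [slope w] lies below
   its chord over [M, A]. *)
Lemma hom_pdeg_chord v w M A :
  M * prank v <= pdeg v <= A * prank v -> M * prank w <= pdeg w <= A * prank w ->
  (A - M) * hom_pdeg v w <= (A * prank v - pdeg v) * (pdeg w - M * prank w).
Proof.
move=> /andP[Mv vA] /andP[Mw wA]; rewrite /hom_pdeg.
case: (leP 0 (pdeg w * prank v - pdeg v * prank w)) => [x_ge0 | x_lt0]; last first.
  by rewrite mulr0 mulr_ge0 // subr_ge0.
have : 0 <= (pdeg v - M * prank v) * (A * prank w - pdeg w).
  by rewrite mulr_ge0 // subr_ge0.
lra.
Qed.

Lemma hom_row_chord v (W : bundle) M A :
  M * prank v <= pdeg v <= A * prank v ->
  (forall w, w \in W -> M * prank w <= pdeg w <= A * prank w) ->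
  (A - M) * \sum_(w <- W) hom_pdeg v w
    <= (A * prank v - pdeg v) * ((dg W)%:~R - M * (rk W)%:R).
Proof.
move=> vMA WMA; rewrite dg_sum rk_sum (mulr_sumr _ _ _ M) -sumrB !mulr_sumr !big_seq.
by apply: ler_sum => w /WMA; apply: hom_pdeg_chord.
Qed.

Lemma hn_eval_cat_rk (l1 l2 : bundle) : wf l1 ->
  hn_eval (l1 ++ l2) (rk l1)%:R = (dg l1)%:~R.
Proof.
elim: l1 => [|q l1 IH] /=.
  by rewrite /rk /dg !big_nil; case: l2 => [|q l2] _ //=; rewrite ler0n mul0r.
case/andP=> q_gt0 wl1; rewrite /rk /dg !big_cons -/(rk l1) -/(dg l1) natrD intrD.
case: l1 IH wl1 => [|q' l1] IH wl1.
  rewrite /rk /dg !big_nil addr0 lexx /=.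
  by rewrite addr0 mulrC -/(prank q) -pdeg_pslope ?ltr0n.
have rk_gt0 : 0 < (rk (q' :: l1))%:R :> rat.
  by rewrite ltr0n /rk big_cons addn_gt0 (andP wl1).1.
by rewrite ifN -?ltNge ?ltr_pwDr // addrAC subrr add0r IH.
Qed.

Lemma hn_eval_upper (l : bundle) M x : wf l ->
  (forall p, p \in l -> M * prank p <= pdeg p) ->
  0 <= x -> x <= (rk l)%:R ->
  hn_eval l x + M * ((rk l)%:R - x) <= (dg l)%:~R.
Proof.
elim: l x => [|q l IH] x /=.
  rewrite /rk /dg !big_nil => _ _ x_ge0 x_le0; have -> : x = 0 by lra.
  by rewrite subrr mulr0 addr0.
case/andP=> q_gt0 wl lM x_ge0.
have [Mq Ml] : M * prank q <= pdeg q /\ forall p, p \in l -> M * prank p <= pdeg p.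
  by split=> [|p pl]; apply: lM; rewrite inE ?eqxx ?pl ?orbT.
rewrite /rk /dg !big_cons -/(rk l) -/(dg l) natrD intrD => x_le.
case: ifP => [x_le_q | /negbT]; last rewrite -ltNge => x_gt_q.
  have M_le : M * (rk l)%:R <= (dg l)%:~R.
    rewrite rk_sum dg_sum mulr_sumr !big_seq; exact: ler_sum.
  have q_slope : M <= pslope q by rewrite pslope_geE ?ltr0n.
  have q_deg : pdeg q = pslope q * prank q by rewrite pdeg_pslope ?ltr0n.
  have : 0 <= (pslope q - M) * ((q.1)%:R - x) by rewrite mulr_ge0 ?subr_ge0.
  rewrite -[(q.2)%:~R]/(pdeg q) q_deg /prank; lra.
have x_ge : 0 <= x - (q.1)%:R by rewrite subr_ge0 (ltW x_gt_q).
have x_le' : x - (q.1)%:R <= (rk l)%:R by rewrite lerBlDl.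
have := IH _ wl Ml x_ge x_le'; rewrite /pdeg; lra.
Qed.

Lemma perm_hn_sorted (V : bundle) : perm_eq (hn_sorted V) V.
Proof. by rewrite /hn_sorted perm_sort. Qed.

Lemma hn_sorted_last_min (V s : bundle) p : hn_sorted V = rcons s p ->
  forall v, v \in V -> pslope p <= pslope v.
Proof.
have tr : transitive (fun p q : piece => pslope q <= pslope p).
  by move=> a b c ba cb; apply: le_trans cb ba.
have : sorted (fun p q : piece => pslope q <= pslope p) (hn_sorted V).
  by apply: sort_sorted => a b; apply: le_total.
rewrite (sorted_pairwise tr) => + Vdef v.
rewrite -(perm_mem (perm_hn_sorted V)) Vdef.
rewrite -cats1 pairwise_cat /= andbT => /andP[/allrelP s_ge _].
by rewrite mem_cat inE => /orP[/s_ge -> // | /eqP ->]; rewrite ?mem_head.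
Qed.

Lemma HN_upper (W : bundle) M x : wf W ->
  (forall w, w \in W -> M * prank w <= pdeg w) ->
  0 <= x -> x <= (rk W)%:R ->
  HN W x + M * ((rk W)%:R - x) <= (dg W)%:~R.
Proof.
move=> wW WM; have permW := perm_hn_sorted W.
rewrite /HN /rk /dg -!(perm_big _ permW) -/(rk _) -/(dg _).
apply: hn_eval_upper => [|w]; first by rewrite /wf (perm_all _ permW).
by rewrite (perm_mem permW); apply: WM.
Qed.

Lemma HN_le_pdeg_ge (E W : bundle) M : wf E -> wf W -> HN_le E W ->
  (forall w, w \in W -> M * prank w <= pdeg w) ->
  forall e, e \in E -> M * prank e <= pdeg e.
Proof.
move=> wE wW [rkEW [dgEW HN_EW]] WM.
have := perm_hn_sorted E.
case/lastP E_def : (hn_sorted E) => [|s p] permE e eE.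
  by move: eE; rewrite -(perm_mem permE).
have pE : p \in E by rewrite -(perm_mem permE) mem_rcons mem_head.
have ws : wf s by move: wE; rewrite /wf -(perm_all _ permE) -cats1 all_cat => /andP[].
have [rkE dgE] : (rk E)%:R = (rk s)%:R + prank p /\ (dg E)%:~R = (dg s)%:~R + pdeg p.
  by rewrite !rk_sum !dg_sum -!(perm_big _ permE) -cats1 !big_cat !big_seq1.
have p_bound : M * prank p <= pdeg p.
  have x_ge0 : 0 <= (rk s)%:R :> rat by [].
  have x_le : (rk s)%:R <= (rk W)%:R :> rat.
    by rewrite -rkEW rkE lerDl ltW ?(prank_gt0 wE pE).
  have := HN_EW _ x_ge0; rewrite rkEW => /(_ x_le).
  rewrite [HN E _]/HN E_def -cats1 hn_eval_cat_rk //.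
  have := HN_upper wW WM x_ge0 x_le.
  rewrite -rkEW -dgEW rkE dgE; lra.
have p_min := hn_sorted_last_min E_def eE.
rewrite -pslope_geE ?(prank_gt0 wE eE) //; apply: le_trans _ p_min.
by rewrite pslope_geE ?(prank_gt0 wE pE).
Qed.

Section HomDegreeEstimate.

Variables (K E : bundle) (M N A b f : rat).
Hypotheses (wK : wf K) (wE : wf E).
Hypothesis E_slopes : forall e, e \in E -> M * prank e <= pdeg e <= A * prank e.
Hypothesis K_slopes : forall k, k \in K -> pdeg k <= A * prank k.
Hypotheses (rkK : (rk K)%:R = b) (dgK : (dg K)%:~R = M * b).
Hypotheses (rkE : (rk E)%:R = b + f) (dgE : (dg E)%:~R = M * b + N * f).

Lemma hom_row_diff_le k : M <= A -> k \in K ->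
  (A - M) * (\sum_(e <- E) hom_pdeg k e - \sum_(k' <- K) hom_pdeg k k')
    <= f * ((A - M) * (N * prank k - pdeg k)
            - (N - A) * Num.max 0 (pdeg k - M * prank k)).
Proof.
move=> le_MA kK; have r_gt0 := prank_gt0 wK kK.
have hom_KK_ge := hom_row_ge k K; rewrite rkK dgK in hom_KK_ge.
case: (leP (pdeg k) (M * prank k)) => [kM | Mk].
  rewrite max_l ?subr_le0 // mulr0 subr0.
  rewrite hom_row_eq ?rkE ?dgE => [|e eE]; last first.
    have /andP[Me _] := E_slopes eE; have e_gt0 := prank_gt0 wE eE; nra.
  by rewrite [leRHS]mulrCA ler_wpM2l ?subr_ge0 //; lra.
rewrite max_r ?subr_ge0 ?(ltW Mk) //.
have kMA : M * prank k <= pdeg k <= A * prank k by rewrite (ltW Mk) K_slopes.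
have := hom_row_chord kMA E_slopes; rewrite dgE rkE.
have : 0 <= (A - M) * \sum_(k' <- K) hom_pdeg k k'.
  by rewrite mulr_ge0 ?subr_ge0 ?sumr_ge0 // => k' _; apply: hom_pdeg_ge0.
nra.
Qed.

Lemma hom_deg_diff_le : M <= A ->
  (A - M) * (hom_deg K E - hom_deg K K)
    <= f * ((A - M) * (N - M) * b
            - (N - A) * \sum_(k <- K) Num.max 0 (pdeg k - M * prank k)).
Proof.
move=> le_MA; rewrite /hom_deg -sumrB mulr_sumr.
apply: le_trans (_ : _ <= \sum_(k <- K) f * ((A - M) * (N * prank k - pdeg k)
                       - (N - A) * Num.max 0 (pdeg k - M * prank k))) _.
  by rewrite !big_seq; apply: ler_sum => k; apply: hom_row_diff_le.
rewrite -mulr_sumr sumrB -!mulr_sumr sumrB -mulr_sumr -rk_sum -dg_sum rkK dgK.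
by rewrite -mulrBl mulrA.
Qed.

Lemma hom_deg_lt (F : bundle) :
  (rk F)%:R = f -> (dg F)%:~R = N * f -> 0 < f -> A < N ->
  (exists2 k, k \in K & M * prank k < pdeg k) ->
  hom_deg K E < hom_deg K K + hom_deg E F.
Proof.
move=> rkF dgF f_gt0 lt_AN [k0 k0K Mk0].
have lt_MA : M < A.
  by rewrite -(ltr_pM2r (prank_gt0 wK k0K)) (lt_le_trans Mk0) ?K_slopes.
set P := \sum_(k <- K) Num.max 0 (pdeg k - M * prank k).
have P_gt0 : 0 < P.
  rewrite /P (big_rem k0 k0K) /= ltr_pwDl ?sumr_ge0 // => [|k _]; last by rewrite le_max lexx.
  by rewrite lt_max subr_gt0 Mk0 orbT.
have AM_gt0 : 0 < A - M by rewrite subr_gt0.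
have EF_ge : (A - M) * (f * b * (N - M)) <= (A - M) * hom_deg E F.
  rewrite ler_wpM2l ?(ltW AM_gt0) //; apply: le_trans _ (hom_deg_ge E F).
  rewrite rkE dgE rkF dgF; nra.
have KE_le := hom_deg_diff_le (ltW lt_MA); rewrite -/P in KE_le.
have gap_gt0 : 0 < f * (N - A) * P by rewrite !mulr_gt0 ?subr_gt0.
rewrite -subr_lt0 -(pmulr_rlt0 _ AM_gt0); lra.
Qed.

End HomDegreeEstimate.

Theorem theorem5p1 (D F E K : bundle) :
  wf D -> wf F -> wf E -> wf K ->
  semistable D -> semistable F -> (0 < rk D)%N -> (0 < rk F)%N ->
  slope D <= slope F ->
  HN_le E (dsum D F) ->
  maxslope E < slope F ->
  rk K = rk D -> dg K = dg D ->
  maxslope K <= maxslope E ->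
  ~~ semistable K ->
  deg_ge0 (tens (dual K) E) < deg_ge0 (tens (dual K) K) + deg_ge0 (tens (dual E) F).
Proof.
move=> wD wF wE wK ssD ssF rkD_gt0 rkF_gt0 le_MN HN_E lt_AN rkK dgK le_KA unstK.
set M := slope D in le_MN; set N := slope F in le_MN lt_AN.
set A := maxslope E in lt_AN le_KA.
have DF_slopes w : w \in dsum D F -> M * prank w <= pdeg w.
  rewrite mem_cat => /orP[wD' | wF']; first by rewrite (semistable_pdeg wD).
  by rewrite (semistable_pdeg wF) // ler_wpM2r // ltW ?(prank_gt0 wF wF').
have E_slopes e : e \in E -> M * prank e <= pdeg e <= A * prank e.
  move=> eE; rewrite -pslope_leE ?(prank_gt0 wE eE) // maxslope_ge // andbT.
  by apply: (HN_le_pdeg_ge wE _ HN_E DF_slopes eE); rewrite /wf /dsum all_cat; apply/andP.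
have K_slopes k : k \in K -> pdeg k <= A * prank k.
  move=> kK; rewrite -pslope_leE ?(prank_gt0 wK kK) //.
  exact: le_trans (maxslope_ge kK) le_KA.
have [rkE [dgE _]] := HN_E.
have K_unstable : exists2 k, k \in K & M * prank k < pdeg k.
  apply/hasP; apply: contraNT unstK => /hasPn K_le.
  apply: (semistable_of_pdeg_le (c := M) wK) => [k /K_le | ]; first by rewrite leNgt.
  by rewrite rkK dgK dg_slope.
rewrite -(ltr_int rat) intrD !deg_ge0_tens_dual.
apply: (hom_deg_lt wK wE E_slopes K_slopes (b := (rk D)%:R) (f := (rk F)%:R)) => //.
- by rewrite rkK.
- by rewrite dgK dg_slope.
- by rewrite rkE /rk big_cat natrD.
- by rewrite dgE /dg big_cat intrD -!/(dg _) !dg_slope.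
- by rewrite dg_slope.
- by rewrite ltr0n.
- exact: lt_AN.
Qed.
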